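(* Let $n$ be a positive integer. Then, as $m\to\infty$ through the positive integers, \[ \sum_{k = 1}^{m} (-1)^{k-1} \binom{m}{k} \frac{1}{k^{n}} = \frac{\log^{n}{m}}{n!} + \frac{\gamma\log^{n-1}{m}}{(n-1)!} + O(\log^{n-2}{m}). \]
   Context: $\gamma$ is the Euler--Mascheroni constant. *)

From Stdlib Require Import Reals Lra.
From Coquelicot Require Import Coquelicot.
Open Scope R_scope.

Definition harmonic (m : nat) : R := sum_n_m (fun k => / INR k) 1 m.

Definition euler_gamma : R :=
  real (Lim_seq (fun m => harmonic m - ln (INR m))).

Definition alt_binom_sum (n m : nat) : R :=
  sum_n_m (fun k => (-1) ^ (k - 1) * Binomial.C m k / INR k ^ n) 1 m.

From Stdlib Require Import Reals Arith Factorial Lra Lia.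
From Coquelicot Require Import Coquelicot.
Open Scope R_scope.

(* Pascal's rule gives S_(n+1)(m+1) = S_(n+1)(m) + S_n(m+1)/(m+1) with S_0(m) = 1 for m >= 1, so
   S_n(m) is the n-fold iterated sum of the weights 1/j over 1 <= j_1 <= ... <= j_n <= m.
   Comparing increments with those of H_m^n/n! shows H_m^n/n! <= S_n(m) <= H_m^n/n! +
   O(H_m^(n-2)), the error being driven by the convergent sum of the 1/j^2.  Since
   H_m = ln m + gamma + O(1/m), expanding (ln m + gamma + O(1/m))^n/n! gives the two main
   terms with an error O(ln^(n-2) m). *)

Lemma sum_n_m_1_0 (a : nat -> R) : sum_n_m a 1 0 = 0.
Proof. rewrite sum_n_m_zero by lia. reflexivity. Qed.

Lemma sum_n_m_1_S (a : nat -> R) (m : nat) : sum_n_m a 1 (S m) = sum_n_m a 1 m + a (S m).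
Proof. rewrite sum_n_Sm by lia. reflexivity. Qed.

Lemma sum_n_m_Rplus (a b : nat -> R) (n m : nat) :
  sum_n_m (fun k => a k + b k) n m = sum_n_m a n m + sum_n_m b n m.
Proof. exact (sum_n_m_plus a b n m). Qed.

Lemma sum_n_m_Rmult_l (c : R) (a : nat -> R) (n m : nat) :
  sum_n_m (fun k => c * a k) n m = c * sum_n_m a n m.
Proof. exact (sum_n_m_mult_l c a n m). Qed.

Lemma INR_fact_S (n : nat) : INR (fact (S n)) = INR (S n) * INR (fact n).
Proof. rewrite fact_simpl, mult_INR. reflexivity. Qed.

Lemma INR_fact_ge_1 (n : nat) : 1 <= INR (fact n).
Proof. apply (le_INR 1), lt_O_fact. Qed.

Lemma pow_sub_pow_bounds (x y : R) (k : nat) : 0 <= y <= x ->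
  INR (S k) * (x - y) * y ^ k <= x ^ S k - y ^ S k <= INR (S k) * (x - y) * x ^ k.
Proof.
  intros [Hy Hyx]. induction k as [|k [IHlo IHhi]].
  - simpl. lra.
  - assert (Hyk : y ^ S k <= x ^ S k) by (apply pow_incr; lra).
    assert (0 <= y ^ k) by (apply pow_le; lra).
    assert (0 <= y ^ S k) by (apply pow_le; lra).
    rewrite (S_INR (S k)). simpl pow in *. rewrite S_INR in *.
    split; nra.
Qed.

Lemma pow_div_fact_increment (x y : R) (k : nat) : 0 <= y <= x ->
  (x - y) * (y ^ k / INR (fact k))
    <= x ^ S k / INR (fact (S k)) - y ^ S k / INR (fact (S k))
    <= (x - y) * (x ^ k / INR (fact k)).
Proof.
  intros Hxy. destruct (pow_sub_pow_bounds x y k Hxy) as [Hlo Hhi].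
  assert (Hk : 0 < INR (S k)) by (apply lt_0_INR; lia).
  assert (Hf : 0 < INR (fact k)) by (apply lt_0_INR, lt_O_fact).
  rewrite INR_fact_S.
  replace (x ^ S k / (INR (S k) * INR (fact k)) - y ^ S k / (INR (S k) * INR (fact k)))
    with ((x ^ S k - y ^ S k) / (INR (S k) * INR (fact k))) by (field; lra).
  replace ((x - y) * (y ^ k / INR (fact k)))
    with (INR (S k) * (x - y) * y ^ k / (INR (S k) * INR (fact k))) by (field; lra).
  replace ((x - y) * (x ^ k / INR (fact k)))
    with (INR (S k) * (x - y) * x ^ k / (INR (S k) * INR (fact k))) by (field; lra).
  assert (Hd : 0 < INR (S k) * INR (fact k)) by nra.
  split; apply Rmult_le_compat_r; try lra; apply Rlt_le, Rinv_0_lt_compat; lra.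
Qed.

Section IteratedWeightedSums.

Variable t : nat -> R.
Hypothesis t_ge0 : forall j, 0 <= t j.

Let h (m : nat) : R := sum_n_m t 1 m.
Let w (m : nat) : R := sum_n_m (fun j => t j ^ 2) 1 m.

(* [A n m] is the iterated sum of [t j_1 * ... * t j_n] over [1 <= j_1 <= ... <= j_n <= m]. *)
Variable A : nat -> nat -> R.
Hypothesis A_n_0 : forall n, A n 0 = 0.
Hypothesis A_0_S : forall m, A 0 (S m) = 1.
Hypothesis A_S_S : forall n m, A (S n) (S m) = A (S n) m + t (S m) * A n (S m).

Let h_0 : h 0 = 0.
Proof. apply sum_n_m_1_0. Qed.

Let h_S (m : nat) : h (S m) = h m + t (S m).
Proof. apply sum_n_m_1_S. Qed.

Let h_ge0 (m : nat) : 0 <= h m.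
Proof.
  induction m as [|m IHm]; [rewrite h_0; lra|].
  rewrite h_S. pose proof (t_ge0 (S m)). lra.
Qed.

Let h_le (j m : nat) : (j <= m)%nat -> h j <= h m.
Proof.
  induction 1 as [|m _ IHm]; [lra|].
  rewrite h_S. pose proof (t_ge0 (S m)). lra.
Qed.

Let w_0 : w 0 = 0.
Proof. apply sum_n_m_1_0. Qed.

Let w_S (m : nat) : w (S m) = w m + t (S m) ^ 2.
Proof. exact (sum_n_m_1_S (fun j => t j ^ 2) m). Qed.

Let w_ge0 (m : nat) : 0 <= w m.
Proof.
  induction m as [|m IHm]; [rewrite w_0; lra|].
  rewrite w_S. pose proof (pow2_ge_0 (t (S m))). lra.
Qed.

Lemma iterated_sum_1 (m : nat) : A 1 m = h m.
Proof.
  induction m as [|m IHm].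
  - rewrite A_n_0, h_0. reflexivity.
  - rewrite A_S_S, A_0_S, IHm, h_S. ring.
Qed.

Lemma iterated_sum_ge (n m : nat) : h m ^ S n / INR (fact (S n)) <= A (S n) m.
Proof.
  revert m. induction n as [|n IHn]; intro m.
  - rewrite iterated_sum_1. simpl. lra.
  - induction m as [|m IHm].
    + rewrite A_n_0, h_0, pow_i by lia. unfold Rdiv. lra.
    + rewrite A_S_S.
      assert (Hh : 0 <= h m <= h (S m)) by (split; [apply h_ge0 | apply h_le; lia]).
      destruct (pow_div_fact_increment (h (S m)) (h m) (S n) Hh) as [_ Hinc].
      replace (h (S m) - h m) with (t (S m)) in Hinc by (rewrite h_S; ring).
      assert (t (S m) * (h (S m) ^ S n / INR (fact (S n))) <= t (S m) * A (S n) (S m))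
        by (apply Rmult_le_compat_l; [apply t_ge0 | apply IHn]).
      lra.
Qed.

Lemma iterated_sum_excess_step (n m : nat) (c : R) : 0 <= c ->
  (forall j, (j <= m)%nat -> A (S n) j - h j ^ S n / INR (fact (S n)) <= c) ->
  A (S (S n)) m - h m ^ S (S n) / INR (fact (S (S n)))
    <= c * h m + w m * (h m ^ n / INR (fact n)).
Proof.
  intros Hc. induction m as [|m IHm]; intros Hbound.
  - rewrite A_n_0, h_0, w_0, pow_i by lia. unfold Rdiv. lra.
  - specialize (IHm (fun j Hj => Hbound j (le_S _ _ Hj))).
    specialize (Hbound (S m) (le_n _)).
    rewrite A_S_S, w_S.
    assert (Hh : 0 <= h m <= h (S m)) by (split; [apply h_ge0 | apply h_le; lia]).
    destruct (pow_div_fact_increment _ _ (S n) Hh) as [Hinc2 _].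
    destruct (pow_div_fact_increment _ _ n Hh) as [_ Hinc1].
    replace (h (S m) - h m) with (t (S m)) in Hinc1, Hinc2 by (rewrite h_S; ring).
    assert (Hpow : h m ^ n / INR (fact n) <= h (S m) ^ n / INR (fact n)).
    { unfold Rdiv. apply Rmult_le_compat_r.
      - apply Rlt_le, Rinv_0_lt_compat, lt_0_INR, lt_O_fact.
      - apply pow_incr. exact Hh. }
    pose proof (t_ge0 (S m)). pose proof (w_ge0 m). pose proof (h_S m).
    nra.
Qed.

Lemma iterated_sum_excess_le (W : R) (n m : nat) : (forall j, w j <= W) ->
  A (S (S n)) m - h m ^ S (S n) / INR (fact (S (S n))) <= INR (S n) * W * (h m + 1) ^ n.
Proof.
  intros HW. assert (HW0 : 0 <= W) by (pose proof (HW 0%nat); rewrite w_0 in *; lra).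
  revert m. induction n as [|n IHn]; intro m.
  - assert (Hstep := iterated_sum_excess_step 0 m 0 (Rle_refl 0)).
    refine (Rle_trans _ _ _ (Hstep _) _).
    + intros j _. rewrite iterated_sum_1. simpl. lra.
    + specialize (HW m). simpl. lra.
  - assert (Hh := h_ge0 m).
    set (c := INR (S n) * W * (h m + 1) ^ n).
    assert (Hc : 0 <= c) by (apply Rmult_le_pos; [apply Rmult_le_pos; [apply pos_INR | lra] | apply pow_le; lra]).
    assert (Hstep := iterated_sum_excess_step (S n) m c Hc).
    refine (Rle_trans _ _ _ (Hstep _) _).
    + intros j Hj. refine (Rle_trans _ _ _ (IHn j) _).
      apply Rmult_le_compat_l; [apply Rmult_le_pos; [apply pos_INR | lra]|].
      apply pow_incr. pose proof (h_ge0 j). pose proof (h_le j m Hj). lra.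
    + assert (Hf := INR_fact_ge_1 (S n)).
      assert (Hpow : h m ^ S n <= (h m + 1) ^ S n) by (apply pow_incr; lra).
      assert (Hpow' : 0 <= h m ^ S n) by (apply pow_le; lra).
      assert (Hdiv : h m ^ S n / INR (fact (S n)) <= (h m + 1) ^ S n).
      { apply (Rle_trans _ (h m ^ S n)); [|exact Hpow].
        unfold Rdiv. rewrite <- (Rmult_1_r (h m ^ S n)) at 2.
        apply Rmult_le_compat_l; [lra|]. rewrite <- Rinv_1. apply Rinv_le_contravar; lra. }
      assert (Hw : w m * (h m ^ S n / INR (fact (S n))) <= W * (h m + 1) ^ S n).
      { apply Rmult_le_compat; [apply w_ge0 | apply Rmult_le_pos, Rlt_le, Rinv_0_lt_compat | apply HW | exact Hdiv]; lra. }
      assert (Hch : c * h m <= c * (h m + 1)) by (apply Rmult_le_compat_l; lra).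
      replace (INR (S (S n)) * W * (h m + 1) ^ S n) with (c * (h m + 1) + W * (h m + 1) ^ S n)
        by (unfold c; rewrite (S_INR (S n)); simpl; ring).
      lra.
Qed.

End IteratedWeightedSums.

Lemma binomial_C_div_S (m j : nat) : (j <= m)%nat ->
  Binomial.C m j / INR (S j) = Binomial.C (S m) (S j) / INR (S m).
Proof.
  intros Hjm. unfold Binomial.C.
  replace (S m - S j)%nat with (m - j)%nat by lia.
  rewrite !INR_fact_S.
  pose proof (INR_fact_neq_0 m). pose proof (INR_fact_neq_0 j). pose proof (INR_fact_neq_0 (m - j)).
  assert (INR (S j) <> 0) by (apply not_0_INR; lia).
  assert (INR (S m) <> 0) by (apply not_0_INR; lia).
  field. repeat split; assumption.
Qed.

Lemma alt_binom_sum_n_0 (n : nat) : alt_binom_sum n 0 = 0.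
Proof. apply sum_n_m_1_0. Qed.

Lemma alt_binom_sum_0_S (m : nat) : alt_binom_sum 0 (S m) = 1.
Proof.
  set (g := fun i => Binomial.C (S m) i * (-1) ^ i * 1 ^ (S m - i)).
  assert (Hzero : sum_n_m g 0 (S m) = 0).
  { change (sum_n g (S m) = 0). rewrite sum_n_Reals. unfold g. rewrite <- binomial.
    replace (-1 + 1) with 0 by ring. apply pow_ne_zero. lia. }
  rewrite sum_Sn_m in Hzero by lia.
  assert (Hg0 : g 0%nat = 1) by (unfold g; rewrite C_n_0, pow1; simpl; ring).
  assert (Htail : sum_n_m g 1 (S m) = - alt_binom_sum 0 (S m)).
  { replace (- alt_binom_sum 0 (S m)) with (-1 * alt_binom_sum 0 (S m)) by ring.
    unfold alt_binom_sum. rewrite <- sum_n_m_Rmult_l. apply sum_n_m_ext_loc. intros [|k] Hk; [lia|].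
    unfold g. simpl (S k - 1)%nat. rewrite Nat.sub_0_r, pow1. simpl pow.
    change (Binomial.C (S m) (S k) * (-1 * (-1) ^ k) * 1
      = -1 * ((-1) ^ k * Binomial.C (S m) (S k) / 1)). field. }
  change (plus (g 0%nat) (sum_n_m g 1 (S m)) = 0) in Hzero. unfold plus in Hzero. simpl in Hzero.
  lra.
Qed.

(* Pascal's rule is applied only for [k <= m]: Stdlib's [Binomial.C m k] is a
   quotient of factorials with truncated subtraction, so it does not vanish for [k > m]. *)
Lemma alt_binom_sum_S_S (n m : nat) :
  alt_binom_sum (S n) (S m) = alt_binom_sum (S n) m + / INR (S m) * alt_binom_sum n (S m).
Proof.
  unfold alt_binom_sum.
  set (f := fun k => (-1) ^ (k - 1) * Binomial.C m (k - 1) / INR k ^ S n).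
  assert (Hpascal : forall k, (1 <= k <= m)%nat ->
    (-1) ^ (k - 1) * Binomial.C (S m) k / INR k ^ S n
    = (-1) ^ (k - 1) * Binomial.C m k / INR k ^ S n + f k).
  { intros [|j] Hj; [lia|]. unfold f. rewrite <- (pascal m j) by lia.
    simpl (S j - 1)%nat. rewrite Nat.sub_0_r. field.
    apply pow_nonzero, not_0_INR. lia. }
  assert (Hlast : (-1) ^ (S m - 1) * Binomial.C (S m) (S m) / INR (S m) ^ S n = f (S m)).
  { unfold f. simpl (S m - 1)%nat. rewrite Nat.sub_0_r, !C_n_n. reflexivity. }
  assert (Hshift : forall k, (1 <= k <= S m)%nat ->
    f k = / INR (S m) * ((-1) ^ (k - 1) * Binomial.C (S m) k / INR k ^ n)).
  { intros [|j] Hj; [lia|]. unfold f. simpl (S j - 1)%nat. rewrite Nat.sub_0_r.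
    assert (HC := binomial_C_div_S m j ltac:(lia)).
    assert (INR (S j) <> 0) by (apply not_0_INR; lia).
    assert (INR (S m) <> 0) by (apply not_0_INR; lia).
    replace (Binomial.C m j) with (Binomial.C (S m) (S j) / INR (S m) * INR (S j))
      by (rewrite <- HC; field; assumption).
    change (INR (S j) ^ S n) with (INR (S j) * INR (S j) ^ n).
    field. repeat split; try apply pow_nonzero; assumption. }
  rewrite sum_n_m_1_S, (sum_n_m_ext_loc _ _ 1 m Hpascal), sum_n_m_Rplus, Hlast.
  rewrite Rplus_assoc, <- sum_n_m_1_S, (sum_n_m_ext_loc _ _ 1 (S m) Hshift), sum_n_m_Rmult_l.
  reflexivity.
Qed.

Lemma sum_inv_sq_le_2 (m : nat) : sum_n_m (fun j => (/ INR j) ^ 2) 1 m <= 2.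
Proof.
  assert (Htel : forall m, sum_n_m (fun j => (/ INR j) ^ 2) 1 (S m) <= 2 - / INR (S m)).
  { induction m0 as [|m0 IH].
    - rewrite sum_n_m_1_S, sum_n_m_1_0. simpl. lra.
    - rewrite sum_n_m_1_S.
      assert (Hx : 1 <= INR (S m0)) by (apply (le_INR 1); lia).
      rewrite (S_INR (S m0)) in *. set (x := INR (S m0)) in *.
      assert ((/ (x + 1)) ^ 2 <= / x - / (x + 1)).
      { apply (Rmult_le_reg_r (x * (x + 1) ^ 2)); [nra|]. field_simplify; lra. }
      lra. }
  destruct m as [|m]; [rewrite sum_n_m_1_0; lra|].
  assert (0 < / INR (S m)) by (apply Rinv_0_lt_compat, lt_0_INR; lia).
  specialize (Htel m). lra.
Qed.

Lemma inv_INR_ge0 (j : nat) : 0 <= / INR j.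
Proof.
  destruct j as [|j]; [change (INR 0) with 0; rewrite Rinv_0; lra|].
  apply Rlt_le, Rinv_0_lt_compat, lt_0_INR. lia.
Qed.

Lemma alt_binom_sum_1 (m : nat) : alt_binom_sum 1 m = harmonic m.
Proof.
  exact (iterated_sum_1 _ alt_binom_sum alt_binom_sum_n_0 alt_binom_sum_0_S alt_binom_sum_S_S m).
Qed.

Lemma alt_binom_sum_ge (n m : nat) :
  harmonic m ^ S n / INR (fact (S n)) <= alt_binom_sum (S n) m.
Proof.
  exact (iterated_sum_ge _ inv_INR_ge0 alt_binom_sum alt_binom_sum_n_0 alt_binom_sum_0_S
           alt_binom_sum_S_S n m).
Qed.

Lemma alt_binom_sum_le (n m : nat) :
  alt_binom_sum (S (S n)) m - harmonic m ^ S (S n) / INR (fact (S (S n)))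
    <= INR (S n) * 2 * (harmonic m + 1) ^ n.
Proof.
  exact (iterated_sum_excess_le _ inv_INR_ge0 alt_binom_sum alt_binom_sum_n_0 alt_binom_sum_0_S
           alt_binom_sum_S_S 2 n m sum_inv_sq_le_2).
Qed.

Lemma harmonic_S (m : nat) : harmonic (S m) = harmonic m + / INR (S m).
Proof. apply sum_n_m_1_S. Qed.

Lemma ln_le_sub_1 (x : R) : 0 < x -> ln x <= x - 1.
Proof. intros Hx. pose proof (exp_ineq1_le (ln x)). rewrite exp_ln in H by exact Hx. lra. Qed.

Lemma monotone_squeeze_limit (u v : nat -> R) :
  (forall n, u (S n) <= u n) -> (forall n, v n <= v (S n)) -> (forall n, v n <= u n) ->
  exists l, is_lim_seq u l /\ forall n, v n <= l <= u n.
Proof.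
  intros Hu Hv Hvu.
  assert (Hv_mono : forall n p, v n <= v (p + n)%nat).
  { intros n p. induction p as [|p IHp]; simpl; [lra|]. pose proof (Hv (p + n)%nat). lra. }
  destruct (ex_finite_lim_seq_decr u (v 0%nat) Hu) as [l Hl].
  { intros p. pose proof (Hv_mono 0%nat p). pose proof (Hvu (p + 0)%nat). rewrite Nat.add_0_r in *. lra. }
  exists l. split; [exact Hl|]. intros n. split.
  - assert (Hle : Rbar_le (v n) l).
    { apply (is_lim_seq_le (fun _ => v n) (fun p => u (p + n)%nat)).
      + intros p. pose proof (Hv_mono n p). pose proof (Hvu (p + n)%nat). lra.
      + apply is_lim_seq_const.
      + apply (is_lim_seq_incr_n u n l), Hl. }
    exact Hle.
  - exact (is_lim_seq_decr_compare u l Hl Hu n).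
Qed.

Lemma euler_gamma_bounds (m : nat) : (1 <= m)%nat ->
  0 <= harmonic m - ln (INR m) - euler_gamma <= / INR m.
Proof.
  set (u := fun p => harmonic (S p) - ln (INR (S p))).
  set (v := fun p => u p - / INR (S p)).
  assert (Hpos : forall p, 0 < INR (S p)) by (intros; apply lt_0_INR; lia).
  assert (Hdecr : forall p, u (S p) <= u p).
  { intros p. unfold u. rewrite (harmonic_S (S p)).
    pose proof (ln_le_sub_1 (INR (S p) / INR (S (S p))) (Rdiv_lt_0_compat _ _ (Hpos p) (Hpos (S p)))).
    rewrite ln_div in H by auto.
    replace (INR (S p) / INR (S (S p)) - 1) with (- / INR (S (S p))) in H
      by (rewrite (S_INR (S p)); field; pose proof (Hpos p); lra).
    lra. }
  assert (Hincr : forall p, v p <= v (S p)).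
  { intros p. unfold v, u. rewrite (harmonic_S (S p)).
    pose proof (ln_le_sub_1 (INR (S (S p)) / INR (S p)) (Rdiv_lt_0_compat _ _ (Hpos (S p)) (Hpos p))).
    rewrite ln_div in H by auto.
    replace (INR (S (S p)) / INR (S p) - 1) with (/ INR (S p)) in H
      by (rewrite (S_INR (S p)); field; pose proof (Hpos p); lra).
    lra. }
  assert (Hvu : forall p, v p <= u p)
    by (intros p; unfold v; pose proof (Rinv_0_lt_compat _ (Hpos p)); lra).
  destruct (monotone_squeeze_limit u v Hdecr Hincr Hvu) as [l [Hl Hvlu]].
  assert (Hgamma : euler_gamma = l).
  { unfold euler_gamma. rewrite <- Lim_seq_incr_1. change (real (Lim_seq u) = l).
    rewrite (is_lim_seq_unique _ _ Hl). reflexivity. }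
  destruct m as [|p]; [lia|]. intros _.
  specialize (Hvlu p). unfold v, u in Hvlu. rewrite Hgamma. lra.
Qed.

Lemma pow_add_sub_linear_bounds (k : nat) (L g : R) : 1 <= L -> 0 <= g <= 2 ->
  0 <= (L + g) ^ S (S k) - L ^ S (S k) - INR (S (S k)) * g * L ^ S k
    <= INR (S (S k)) * INR (S k) * 4 * 3 ^ k * L ^ k.
Proof.
  intros HL Hg.
  assert (HLg : 0 <= L <= L + g) by lra.
  destruct (pow_sub_pow_bounds _ _ (S k) HLg) as [Hlo2 Hhi2].
  destruct (pow_sub_pow_bounds _ _ k HLg) as [_ Hhi1].
  replace (L + g - L) with g in * by ring.
  assert (HN2 := pos_INR (S (S k))). assert (HN1 := pos_INR (S k)).
  assert (H3 : (L + g) ^ k <= 3 ^ k * L ^ k)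
    by (rewrite <- Rpow_mult_distr; apply pow_incr; lra).
  assert (Hgg : g * g <= 4) by nra.
  assert (Hquad : g * (INR (S k) * g * (L + g) ^ k) <= INR (S k) * 4 * (3 ^ k * L ^ k)).
  { replace (g * (INR (S k) * g * (L + g) ^ k)) with (INR (S k) * (g * g) * (L + g) ^ k) by ring.
    apply Rmult_le_compat; [nra | apply pow_le; lra | nra | exact H3]. }
  split; [lra|].
  assert (Hstep : INR (S (S k)) * g * (L + g) ^ S k - INR (S (S k)) * g * L ^ S k
                  <= INR (S (S k)) * (INR (S k) * 4 * (3 ^ k * L ^ k))).
  { replace (INR (S (S k)) * g * (L + g) ^ S k - INR (S (S k)) * g * L ^ S k)
      with (INR (S (S k)) * (g * ((L + g) ^ S k - L ^ S k))) by ring.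
    apply Rmult_le_compat_l; [lra|].
    apply (Rle_trans _ (g * (INR (S k) * g * (L + g) ^ k))); [|exact Hquad].
    apply Rmult_le_compat_l; lra. }
  lra.
Qed.

Lemma one_le_ln_le_id (x : R) : exp 1 <= x -> 1 <= ln x <= x.
Proof.
  intros Hx. assert (Hx0 : 0 < x) by (pose proof (exp_pos 1); lra). split.
  - rewrite <- (ln_exp 1). apply ln_le; [apply exp_pos | exact Hx].
  - pose proof (ln_le_sub_1 x Hx0). lra.
Qed.

Lemma euler_gamma_between_0_1 : 0 <= euler_gamma <= 1.
Proof.
  assert (Hb := euler_gamma_bounds 1 (le_n 1)).
  assert (H1 : harmonic 1 = 1).
  { unfold harmonic. rewrite sum_n_m_1_S, sum_n_m_1_0. simpl. lra. }
  rewrite H1 in Hb. change (INR 1) with 1 in Hb. rewrite ln_1, Rinv_1 in Hb. lra.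
Qed.

Lemma harmonic_asymptotics (m : nat) : (1 <= m)%nat -> exp 1 <= INR m ->
  Rabs (harmonic m - ln (INR m) - euler_gamma) <= / ln (INR m).
Proof.
  intros Hm Hx. destruct (one_le_ln_le_id _ Hx) as [HL HLx].
  destruct (euler_gamma_bounds m Hm) as [Hlo Hhi].
  rewrite Rabs_pos_eq by exact Hlo.
  apply (Rle_trans _ _ _ Hhi), Rinv_le_contravar; lra.
Qed.

Lemma pow_expansion_error (k : nat) (L gamma eps a c : R) :
  1 <= L -> 0 <= gamma <= 1 -> 0 <= eps <= 1 -> eps * L <= 1 ->
  0 <= a - (L + gamma + eps) ^ S (S k) / INR (fact (S (S k))) <= c * L ^ k ->
  0 <= a - L ^ S (S k) / INR (fact (S (S k))) - gamma * L ^ S k / INR (fact (S k))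
    <= (c + INR (S (S k)) * INR (S k) * 4 * 3 ^ k + 1) * L ^ k.
Proof.
  intros HL Hgamma Heps HepsL [HD0 HD1].
  set (g := gamma + eps).
  destruct (pow_add_sub_linear_bounds k L g HL ltac:(unfold g; lra)) as [HR0 HR1].
  replace (L + gamma + eps) with (L + g) in HD0, HD1 by (unfold g; ring).
  set (F := INR (fact (S k))) in *.
  assert (HF : 1 <= F) by apply INR_fact_ge_1.
  rewrite INR_fact_S in *. fold F in HD0, HD1 |- *.
  set (N := INR (S (S k))) in *.
  set (R0 := (L + g) ^ S (S k) - L ^ S (S k) - N * g * L ^ S k) in *.
  set (D := a - (L + g) ^ S (S k) / (N * F)) in *.
  assert (HN : 1 <= N) by (apply (le_INR 1); lia).
  assert (HNF : 1 <= N * F) by nra.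
  assert (HLk : 0 <= L ^ k) by (apply pow_le; lra).
  assert (Hsplit : a - L ^ S (S k) / (N * F) - gamma * L ^ S k / F
                   = D + R0 / (N * F) + eps * L ^ S k / F)
    by (unfold D, R0, g; field; lra).
  assert (HR : 0 <= R0 / (N * F) <= R0).
  { split; [apply Rdiv_le_0_compat; lra|].
    apply (Rmult_le_reg_r (N * F)); [lra|]. unfold Rdiv. rewrite Rmult_assoc, Rinv_l by lra. nra. }
  assert (HepsF : 0 <= eps * L ^ S k / F <= L ^ k).
  { assert (Hprod : 0 <= eps * L ^ S k <= L ^ k).
    { simpl pow. split; [apply Rmult_le_pos; [lra | nra]|]. rewrite <- Rmult_assoc. nra. }
    split; [apply Rdiv_le_0_compat; lra|].
    apply (Rmult_le_reg_r F); [lra|]. unfold Rdiv. rewrite Rmult_assoc, Rinv_l by lra. nra. }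
  rewrite Hsplit. split; lra.
Qed.

Lemma alt_binom_sum_asymptotics (k : nat) : exists C, forall m : nat,
  (1 <= m)%nat -> exp 1 <= INR m ->
  Rabs (alt_binom_sum (S (S k)) m - ln (INR m) ^ S (S k) / INR (fact (S (S k)))
        - euler_gamma * ln (INR m) ^ S k / INR (fact (S k)))
    <= C * ln (INR m) ^ k.
Proof.
  exists (INR (S k) * 2 * 4 ^ k + INR (S (S k)) * INR (S k) * 4 * 3 ^ k + 1).
  intros m Hm Hx.
  destruct (one_le_ln_le_id _ Hx) as [HL HLx].
  destruct (euler_gamma_bounds m Hm) as [Heps0 Heps1].
  assert (Hinv : / INR m * INR m = 1) by (apply Rinv_l; lra).
  assert (Hinv1 : / INR m <= 1) by (rewrite <- Rinv_1; apply Rinv_le_contravar; lra).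
  set (L := ln (INR m)) in *. set (H := harmonic m) in *.
  set (eps := H - L - euler_gamma) in *.
  assert (HepsL : eps * L <= 1)
    by (rewrite <- Hinv; apply Rmult_le_compat; lra).
  assert (Hgamma := euler_gamma_between_0_1).
  assert (HH : H = L + euler_gamma + eps) by (unfold eps; ring).
  assert (HD1 : alt_binom_sum (S (S k)) m - H ^ S (S k) / INR (fact (S (S k)))
                <= INR (S k) * 2 * 4 ^ k * L ^ k).
  { apply (Rle_trans _ _ _ (alt_binom_sum_le k m)). fold H.
    replace (INR (S k) * 2 * 4 ^ k * L ^ k) with (INR (S k) * 2 * (4 ^ k * L ^ k)) by ring.
    apply Rmult_le_compat_l; [pose proof (pos_INR (S k)); lra|].
    rewrite <- Rpow_mult_distr. apply pow_incr. lra. }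
  assert (HD0 := alt_binom_sum_ge (S k) m). fold H in HD0.
  rewrite HH in HD0, HD1.
  assert (HD : 0 <= alt_binom_sum (S (S k)) m
                     - (L + euler_gamma + eps) ^ S (S k) / INR (fact (S (S k)))
                   <= INR (S k) * 2 * 4 ^ k * L ^ k) by lra.
  destruct (pow_expansion_error k L euler_gamma eps _ _ HL Hgamma ltac:(lra) HepsL HD)
    as [Hlo Hhi].
  rewrite Rabs_pos_eq by exact Hlo. exact Hhi.
Qed.

Theorem corollary1 (n : nat) (hn : (1 <= n)%nat) :
  exists C M : R, forall m : nat, (1 <= m)%nat -> M <= INR m ->
    Rabs (alt_binom_sum n m
          - (ln (INR m)) ^ n / INR (fact n)
          - euler_gamma * (ln (INR m)) ^ (n - 1) / INR (fact (n - 1)))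
    <= C * powerRZ (ln (INR m)) (Z.of_nat n - 2).
Proof.
  destruct n as [|[|k]]; [lia| |].
  - exists 1, (exp 1). intros m Hm Hx.
    destruct (one_le_ln_le_id _ Hx) as [HL _].
    rewrite alt_binom_sum_1.
    replace (harmonic m - ln (INR m) ^ 1 / INR (fact 1)
             - euler_gamma * ln (INR m) ^ (1 - 1) / INR (fact (1 - 1)))
      with (harmonic m - ln (INR m) - euler_gamma) by (simpl; field).
    replace (1 * powerRZ (ln (INR m)) (Z.of_nat 1 - 2)) with (/ ln (INR m)) by (simpl; field; lra).
    exact (harmonic_asymptotics m Hm Hx).
  - destruct (alt_binom_sum_asymptotics k) as [C HC].
    exists C, (exp 1). intros m Hm Hx.
    replace (Z.of_nat (S (S k)) - 2)%Z with (Z.of_nat k) by lia.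
    rewrite <- pow_powerRZ, Nat.sub_1_r. exact (HC m Hm Hx).
Qed.
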